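(* If $G\curvearrowright X$ and $H\curvearrowright Y$ are group actions with $\mathrm{Con}(G\curvearrowright X)=\mathrm{Con}(H\curvearrowright Y)$, then $\tau(G\curvearrowright X)=\tau(H\curvearrowright Y)$.
   Context: For an action $G\curvearrowright X$, an ordered tuple $\mathfrak{g}=(g_1,\dots,g_n)$ of elements of $G$ and a finite partition $\mathcal{E}=\{E_1,\dots,E_m\}$ of $X$ (a configuration pair), a configuration is a tuple $C=(C_0,\dots,C_n)\in\{1,\dots,m\}^{n+1}$ such that some $x\in E_{C_0}$ satisfies $g_i\cdot x\in E_{C_i}$ for $i=1,\dots,n$; the set of these is $\mathrm{Con}(\mathfrak{g},\mathcal{E};X)$, and $\mathrm{Con}(G\curvearrowright X)=\{\mathrm{Con}(\mathfrak{g},\mathcal{E};X): (\mathfrak{g},\mathcal{E})\text{ a configuration pair}\}$. Two actions with equal such collections are called configuration equivalent. A paradoxical decomposition of $G\curvearrowright X$ consists of pairwise disjoint subsets $A_1,\dots,A_n,B_1,\dots,B_m$ of $X$ and elements $g_1,\dots,g_n,h_1,\dots,h_m\in G$ with $X=\bigcup_{i=1}^n g_iA_i=\bigcup_{j=1}^m h_jB_j$. The Tarski number $\tau(G\curvearrowright X)$ is the minimal number of pieces $n+m$ in such a decomposition, and $\infty$ if none exists. *)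

From mathcomp Require Import all_boot.
From mathcomp Require Import boolp.

Set Implicit Arguments.
Unset Strict Implicit.
Unset Printing Implicit Defensive.

Record group_action (G X : Type) := GroupAction {
  gmul : G -> G -> G;
  gone : G;
  ginv : G -> G;
  act  : G -> X -> X;
  gmulA : forall a b c, gmul a (gmul b c) = gmul (gmul a b) c;
  gmul1 : forall a, gmul gone a = a;
  gmulV : forall a, gmul (ginv a) a = gone;
  act1 : forall x, act gone x = x;
  actM : forall a b x, act (gmul a b) x = act a (act b x)
}.

Section Defs.
Variables (G X : Type) (A : group_action G X).

(* A finite partition {E_0,...,E_(m-1)} of X is encoded by the labelling
   c : X -> 'I_m (x \in E_k iff c x = k); pieces are nonempty, i.e. c is onto. *)
Definition is_partition (m : nat) (c : X -> 'I_m) : Prop :=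
  forall k : 'I_m, exists x, c x = k.

(* Con(g, E; X): the set of configurations, a configuration
   (C_0,...,C_n) being encoded as the list [:: C_0; ...; C_n] of labels. *)
Definition Con (n m : nat) (g : 'I_n -> G) (c : X -> 'I_m) : seq nat -> Prop :=
  fun s => exists x : X,
    s = nat_of_ord (c x) :: [seq nat_of_ord (c (act A (g i) x)) | i <- enum 'I_n].

Definition ConAct (S : seq nat -> Prop) : Prop :=
  exists (n m : nat) (g : 'I_n -> G) (c : X -> 'I_m),
    is_partition c /\ forall s, S s <-> Con g c s.

Definition paradoxical (n m : nat) : Prop :=
  exists (P : 'I_n -> X -> Prop) (Q : 'I_m -> X -> Prop)
         (g : 'I_n -> G) (h : 'I_m -> G),
    (forall i i' x, i <> i' -> P i x -> P i' x -> False) /\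
    (forall j j' x, j <> j' -> Q j x -> Q j' x -> False) /\
    (forall i j x, P i x -> Q j x -> False) /\
    (forall x, exists i y, P i y /\ x = act A (g i) y) /\
    (forall x, exists j y, Q j y /\ x = act A (h j) y).

Definition has_paradox_with (k : nat) : Prop :=
  exists n m, n + m = k /\ paradoxical n m.

Lemma tarski_ex (H : exists k, has_paradox_with k) :
  exists k, `[< has_paradox_with k >].
Proof. by case: H => k Hk; exists k; apply/asboolP. Qed.

(* Tarski number: Some k with k the minimal number of pieces,
   None standing for infinity (no paradoxical decomposition). *)
Definition tarski : option nat :=
  match pselect (exists k, has_paradox_with k) with
  | left H => Some (ex_minn (tarski_ex H))
  | right _ => None
  end.

End Defs.

From mathcomp Require Import all_boot.
From mathcomp Require Import boolp.

Set Implicit Arguments.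
Unset Strict Implicit.
Unset Printing Implicit Defensive.

(* A paradoxical decomposition is the same thing as a labelling of the points
   by the piece containing them such that every point is sent by some g_i^-1
   into the i-th piece of the first family and by some h_j^-1 into the j-th
   piece of the second.  After factoring the labelling through a finite
   partition, this condition is a property of each configuration of
   (g_i^-1, h_j^-1), so it transfers between configuration equivalent actions
   and yields decompositions with the same number of pieces. *)

Lemma partition_factor (X : Type) (T : finType) (t0 : T) (c : X -> T) :
  exists k (c' : X -> 'I_k) (e : nat -> T),
    is_partition c' /\ forall x, c x = e (c' x).
Proof.
pose S : {set T} := [set t | `[< exists x, c x = t >]].
have cS x : c x \in enum S by rewrite mem_enum inE; apply/asboolP; exists x.
have c'_lt x : index (c x) (enum S) < #|S| by rewrite cardE index_mem.
exists #|S|, (fun x => Ordinal (c'_lt x)), (nth t0 (enum S)); split.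
  move=> o; have : nth t0 (enum S) o \in S by rewrite -mem_enum mem_nth -?cardE.
  rewrite inE => /asboolP [x cx]; exists x; apply: val_inj => /=.
  by rewrite cx index_uniq ?enum_uniq -?cardE.
by move=> x; rewrite nth_index.
Qed.

Section Paradoxical.
Variables (G X : Type) (A : group_action G X).

Lemma actK a : cancel (act A a) (act A (ginv A a)).
Proof. by move=> x; rewrite -actM gmulV act1. Qed.

Lemma paradoxical_of_empty n m : ~ inhabited X -> paradoxical A n m.
Proof.
move=> X0; exists (fun _ _ => False), (fun _ _ => False).
exists (fun _ => gone A), (fun _ => gone A).
by do 3!split=> //; split=> x; case: X0.
Qed.

Definition paradoxical_labelling n m (g : 'I_n -> G) (h : 'I_m -> G)
    (lab : X -> option ('I_n + 'I_m)) : Prop :=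
  forall x, (exists i, lab (act A (g i) x) = Some (inl i)) /\
            (exists j, lab (act A (h j) x) = Some (inr j)).

Lemma paradoxicalP n m :
  paradoxical A n m <-> exists g h lab, @paradoxical_labelling n m g h lab.
Proof.
split.
  move=> [P [Q [g [h [dP [dQ [dPQ [covP covQ]]]]]]]].
  pose piece (o : 'I_n + 'I_m) := match o with inl i => P i | inr j => Q j end.
  have piece_disj o o' x : piece o x -> piece o' x -> o' = o.
    case: o o' => [i|j] [i'|j'] /= Hx Hx'; last 2 first.
    - by exfalso; exact: dPQ Hx' Hx.
    - by case: (eqVneq j' j) => [->|/eqP neq] //; case: (dQ _ _ _ neq Hx' Hx).
    - by case: (eqVneq i' i) => [->|/eqP neq] //; case: (dP _ _ _ neq Hx' Hx).
    - by exfalso; exact: dPQ Hx Hx'.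
  pose lab x := [pick o | `[< piece o x >]].
  have labE o x : piece o x -> lab x = Some o.
    move=> Hx; rewrite /lab; case: pickP => [o' /asboolP Hx'|/(_ o)/asboolP//].
    by rewrite (piece_disj o o' x).
  exists (fun i => ginv A (g i)), (fun j => ginv A (h j)), lab => x; split.
    have [i [y [Piy ->]]] := covP x; exists i; rewrite actK; exact: labE.
  have [j [y [Qjy ->]]] := covQ x; exists j; rewrite actK; exact: labE.
move=> [g [h [lab Hlab]]].
exists (fun i y => lab y = Some (inl i)), (fun j y => lab y = Some (inr j)).
exists (fun i => ginv A (g i)), (fun j => ginv A (h j)).
split; [|split; [|split; [|split]]].
- by move=> i i' y neq -> [E]; apply: neq.
- by move=> j j' y neq -> [E]; apply: neq.
- by move=> i j y ->.
- move=> x; have [[i labi] _] := Hlab x.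
  by exists i, (act A (g i) x); rewrite actK.
- move=> x; have [_ [j labj]] := Hlab x.
  by exists j, (act A (h j) x); rewrite actK.
Qed.

Lemma size_Con N k (g : 'I_N -> G) (c : X -> 'I_k) s :
  Con A g c s -> size s = N.+1.
Proof. by move=> [x ->]; rewrite /= size_map size_enum_ord. Qed.

Lemma Con_forallP N k (g : 'I_N -> G) (c : X -> 'I_k)
    (Phi : ('I_N -> nat) -> Prop) :
  (forall x, Phi (fun o => c (act A (g o) x))) <->
  (forall s, Con A g c s -> Phi (fun o => nth 0 s o.+1)).
Proof.
have nth_Con x : (fun o : 'I_N => nth 0 (nat_of_ord (c x) ::
    [seq nat_of_ord (c (act A (g i) x)) | i <- enum 'I_N]) o.+1) =
    (fun o => c (act A (g o) x)).
  by apply: funext => o /=; rewrite (nth_map o) ?size_enum_ord ?nth_ord_enum.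
split=> [HPhi s [x ->]|HPhi x]; first by rewrite (nth_Con x).
by rewrite -(nth_Con x); apply: HPhi; exists x.
Qed.

End Paradoxical.

Lemma ConAct_paradoxical (G X H Y : Type) (A : group_action G X)
    (B : group_action H Y) n m :
  (forall S, ConAct A S -> ConAct B S) ->
  paradoxical A n m -> paradoxical B n m.
Proof.
move=> AB /paradoxicalP [g [h [lab Hlab]]].
have [k [c [e [c_part labE]]]] := partition_factor None lab.
pose gh (o : 'I_(n + m)) := match split o with inl i => g i | inr j => h j end.
pose Phi (f : 'I_(n + m) -> nat) :=
  (exists i, e (f (lshift m i)) = Some (inl i)) /\
  (exists j, e (f (rshift n j)) = Some (inr j)).
have PhiA : forall s, Con A gh c s -> Phi (fun o => nth 0 s o.+1).
  apply/Con_forallP => x; have [[i labi] [j labj]] := Hlab x.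
  split; [exists i | exists j]; rewrite -labE /gh.
    by rewrite (unsplitK (inl i) : split (lshift m i) = _).
  by rewrite (unsplitK (inr j) : split (rshift n j) = _).
have ConA : ConAct A (Con A gh c) by exists (n + m), k, gh, c.
have [n' [m' [gB [cB [_ ConB]]]]] := AB _ ConA.
have [[y0]|Y0] := pselect (inhabited Y); last exact: paradoxical_of_empty.
have [s ConBs] : exists s, Con B gB cB s by eexists; exists y0.
have [En'] := etrans (esym (size_Con ConBs)) (size_Con (proj2 (ConB s) ConBs)).
subst n'; apply/paradoxicalP.
exists (fun i => gB (lshift m i)), (fun j => gB (rshift n j)), (fun y => e (cB y)).
by apply: (Con_forallP B gB cB Phi).2 => t /ConB; apply: PhiA.
Qed.

Lemma tarski_ext (G X H Y : Type) (A : group_action G X) (B : group_action H Y) :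
  (forall n m, paradoxical A n m <-> paradoxical B n m) -> tarski A = tarski B.
Proof.
move=> AB.
have paradoxAB k : has_paradox_with A k <-> has_paradox_with B k.
  by split=> -[n [m [nmk P]]]; exists n, m; split=> //; apply/AB.
rewrite /tarski; case: pselect => [[k Ak] | nA]; case: pselect => [[l Bl] | nB].
- congr Some; case: ex_minnP => a /asboolP Aa mina.
  case: ex_minnP => b /asboolP Bb minb.
  by apply/eqP; rewrite eqn_leq mina ?minb //; apply/asboolP/paradoxAB.
- by case: nB; exists k; apply/paradoxAB.
- by case: nA; exists l; apply/paradoxAB.
- by [].
Qed.

Theorem mainTheorem7 (G X H Y : Type) (A : group_action G X) (B : group_action H Y) :
  (forall S : seq nat -> Prop, ConAct A S <-> ConAct B S) ->
  tarski A = tarski B.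
Proof.
move=> AB; apply: tarski_ext => n m.
by split; apply: ConAct_paradoxical => S /AB.
Qed.
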